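(* There is no finite T2R semigroup.
   Context: A semigroup $S$ is a $\Delta$-semigroup if the lattice of all congruences of $S$ is a chain with respect to inclusion. A semigroup $N$ with zero $0$ is nil if every element has some power equal to $0$; non-trivial means having more than one element. A T2R semigroup is a $\Delta$-semigroup $S$ which is the disjoint union of a non-trivial nil ideal $S_0$ (with zero $0$, which is then the zero of $S$) and a subsemigroup $S_1=\{u,v\}$, $u\neq v$, which is a right zero semigroup ($xy=y$ for $x,y\in S_1$). *)

From mathcomp Require Import all_boot.
Set Implicit Arguments. Unset Strict Implicit. Unset Printing Implicit Defensive.

Section Semigroups.
Variables (S : Type) (op : S -> S -> S).

Definition is_congruence (R : S -> S -> Prop) : Prop :=
  (forall a, R a a) /\ (forall a b, R a b -> R b a) /\
  (forall a b c, R a b -> R b c -> R a c) /\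
  (forall a b c, R a b -> R (op a c) (op b c) /\ R (op c a) (op c b)).

Definition delta_semigroup : Prop :=
  forall R1 R2 : S -> S -> Prop, is_congruence R1 -> is_congruence R2 ->
    (forall a b, R1 a b -> R2 a b) \/ (forall a b, R2 a b -> R1 a b).

(* spow x n = x^(n+1) *)
Definition spow (x : S) (n : nat) : S := iter n (op x) x.

Definition T2R : Prop :=
  delta_semigroup /\
  exists (S0 : S -> Prop) (z u v : S),
    u <> v /\ ~ S0 u /\ ~ S0 v /\ (forall x, S0 x \/ x = u \/ x = v) /\
    (forall x y, S0 x -> S0 (op x y) /\ S0 (op y x)) /\
    S0 z /\ (forall x, S0 x -> op z x = z /\ op x z = z) /\
    (forall x, S0 x -> exists n, spow x n = z) /\
    (exists x, S0 x /\ x <> z) /\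
    op u u = u /\ op u v = v /\ op v u = u /\ op v v = v.

End Semigroups.

(* Let S = S0 ⊔ {u, v} be a finite T2R semigroup, z the zero of the nil
   ideal S0.  Among the non-zero elements of S0 choose a whose principal
   ideal S^1 a S^1 has maximal cardinality.  Then every x in S0 dividing a
   is J-equivalent to a, and the elements of S0 not dividing a form an
   ideal [below_a] that contains z and S0·S0 but not a (nilpotency forbids
   a = p a q with p or q in S0).

   Two congruences are generated from [below_a]: [left_gen] adds the pairs
   (uw, vw) and [right_gen] the pairs (wu, wv), w ∈ S0.  Both lie inside the
   Rees congruence of S0, and neither relates a to z.  By the Δ-property
   one of them, E, contains the other, hence both families of pairs; then
   E ∪ {u,v}² is again a congruence, and comparing it with the Rees
   congruence of S0 forces E to identify all of S0, a and z included. *)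

From mathcomp Require Import all_boot.
Set Implicit Arguments. Unset Strict Implicit. Unset Printing Implicit Defensive.

Section Relations.
Variable T : Type.

Definition is_equivalence (Q : T -> T -> Prop) : Prop :=
  (forall x, Q x x) /\ (forall x y, Q x y -> Q y x) /\
  (forall x y w, Q x y -> Q y w -> Q x w).

Definition included (R1 R2 : T -> T -> Prop) : Prop :=
  forall x y, R1 x y -> R2 x y.

Inductive equiv_closure (R : T -> T -> Prop) : T -> T -> Prop :=
| ec_base x y : R x y -> equiv_closure R x y
| ec_refl x : equiv_closure R x x
| ec_sym x y : equiv_closure R x y -> equiv_closure R y x
| ec_trans x y w :
    equiv_closure R x y -> equiv_closure R y w -> equiv_closure R x w.

Lemma equiv_closure_equivalence (R : T -> T -> Prop) :
  is_equivalence (equiv_closure R).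
Proof. by split; [exact: ec_refl | split; [exact: ec_sym | exact: ec_trans]]. Qed.

Lemma equiv_closure_min (R Q : T -> T -> Prop) :
  is_equivalence Q -> included R Q -> included (equiv_closure R) Q.
Proof. by move=> [Qrefl [Qsym Qtrans]] RQ x y; elim=> //; eauto. Qed.

Lemma eq_equivalence : is_equivalence (@eq T).
Proof. by split=> //; split=> [x y ->|x y w -> ->]. Qed.

Definition rees (P : T -> Prop) (x y : T) : Prop := x = y \/ (P x /\ P y).

Lemma rees_equivalence (P : T -> Prop) : is_equivalence (rees P).
Proof.
split; first by left.
split; first by move=> x y [->|[]]; [left | right].
by move=> x y w [->|[Px Py]] [<-|[Py' Pw]]; [left | right | right | right].
Qed.

End Relations.

Lemma preimage_equivalence (T T' : Type) (f : T -> T') (Q : T' -> T' -> Prop) :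
  is_equivalence Q -> is_equivalence (fun x y => Q (f x) (f y)).
Proof. by move=> [Qrefl [Qsym Qtrans]]; split=> //; split; eauto. Qed.

Section Congruences.
Variables (T : Type) (op : T -> T -> T).

Lemma equivalence_congruence (Q : T -> T -> Prop) : is_equivalence Q ->
  (forall x y c, Q x y -> Q (op x c) (op y c) /\ Q (op c x) (op c y)) ->
  is_congruence op Q.
Proof. by move=> [Qrefl [Qsym Qtrans]] Qcomp; do 3!split=> //. Qed.

Lemma equiv_closure_congruence (R : T -> T -> Prop) :
  (forall x y c, R x y ->
     equiv_closure R (op x c) (op y c) /\ equiv_closure R (op c x) (op c y)) ->
  is_congruence op (equiv_closure R).
Proof.
move=> Rcomp; apply: equivalence_congruence; first exact: equiv_closure_equivalence.
move=> x y c; elim=> {x y}.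
- by move=> x y /Rcomp.
- by move=> x; split; apply: ec_refl.
- by move=> x y _ [h1 h2]; split; apply: ec_sym.
- by move=> x y w _ [h1 h2] _ [h3 h4]; split; apply: ec_trans; eauto.
Qed.

Lemma rees_congruence (P : T -> Prop) :
  (forall x y, P x -> P (op x y) /\ P (op y x)) -> is_congruence op (rees P).
Proof.
move=> Pideal; apply: equivalence_congruence; first exact: rees_equivalence.
move=> x y c [->|[Px Py]]; first by split; left.
by have [Pxc Pcx] := Pideal x c Px; have [Pyc Pcy] := Pideal y c Py; split; right.
Qed.

End Congruences.

Section Iteration.
Variables (T : Type) (f g : T -> T).
Hypothesis fg : forall x, f (g x) = g (f x).

Lemma iter_commute n x : iter n f (g x) = g (iter n f x).
Proof. by elim: n => //= n ->; rewrite fg. Qed.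

Lemma iter_comp n x : iter n (fun y => f (g y)) x = iter n f (iter n g x).
Proof. by elim: n => //= n IH; rewrite IH iter_commute. Qed.

End Iteration.

Section Semigroup.
Variables (S : Type) (op : S -> S -> S).
Hypothesis opA : associative op.

Lemma spow_comm s n : op (spow op s n) s = op s (spow op s n).
Proof. by elim: n => //= n IH; rewrite -opA IH. Qed.

Lemma iter_mull s n y : iter n.+1 (op s) y = op (spow op s n) y.
Proof. by elim: n => //= n IH; rewrite IH opA. Qed.

Lemma iter_mulr s n y : iter n.+1 (op^~ s) y = op y (spow op s n).
Proof. by elim: n => //= n IH; rewrite IH -opA spow_comm. Qed.

(* The monoid S^1 is modelled by option S, None being the adjoined unit;
   act p x q is the two-sided translate p x q. *)
Definition lmul (p : option S) : S -> S := if p is Some s then op s else id.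
Definition rmul (q : option S) : S -> S := if q is Some s then op^~ s else id.
Definition act (p : option S) (x : S) (q : option S) : S := lmul p (rmul q x).

Definition mul1 (p q : option S) : option S :=
  match p, q with
  | None, _ => q
  | Some _, None => p
  | Some a, Some b => Some (op a b)
  end.

Lemma lmul_rmul p q x : lmul p (rmul q x) = rmul q (lmul p x).
Proof. by case: p; case: q => //= *; rewrite opA. Qed.

Lemma actM p p' q q' x :
  act p (act p' x q') q = act (mul1 p p') x (mul1 q' q).
Proof.
rewrite /act lmul_rmul [lmul p' _]lmul_rmul.
by case: p; case: p'; case: q; case: q' => //= *; rewrite ?opA.
Qed.

Definition divides (x y : S) : Prop := exists p q, y = act p x q.

Lemma divides_refl x : divides x x.
Proof. by exists None, None. Qed.

Lemma divides_trans x y w : divides x y -> divides y w -> divides x w.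
Proof.
move=> [p [q ->]] [p' [q' ->]].
by exists (mul1 p' p), (mul1 q q'); rewrite actM.
Qed.

Lemma divides_act x p q : divides x (act p x q).
Proof. by exists p, q. Qed.

End Semigroup.

Section T2R.
Variables (S : finType) (op : S -> S -> S).
Hypothesis opA : associative op.
Hypothesis delta : delta_semigroup op.
Variables (S0 : S -> Prop) (z u v : S).
Hypotheses (u_neq_v : u <> v) (u_notin : ~ S0 u) (v_notin : ~ S0 v)
  (cover : forall x, S0 x \/ x = u \/ x = v)
  (S0_ideal : forall x y, S0 x -> S0 (op x y) /\ S0 (op y x))
  (S0_z : S0 z) (z_zero : forall x, S0 x -> op z x = z /\ op x z = z)
  (S0_nil : forall x, S0 x -> exists n, spow op x n = z)
  (uu : op u u = u) (uv : op u v = v) (vu : op v u = u) (vv : op v v = v).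

Local Notation act := (act op).
Local Notation divides := (divides op).
Local Notation mul1 := (mul1 op).

Lemma S0_mull x y : S0 y -> S0 (op x y).
Proof. by move=> Sy; case: (S0_ideal x Sy). Qed.

Lemma S0_mulr x y : S0 x -> S0 (op x y).
Proof. by move=> Sx; case: (S0_ideal y Sx). Qed.

Lemma S0_act p x q : S0 x -> S0 (act p x q).
Proof.
move=> Sx; rewrite /act; have Sq : S0 (rmul op q x) by case: q => //= t; apply: S0_mulr.
by case: p => //= s; apply: S0_mull.
Qed.

Lemma S0P x : reflect (S0 x) ((x != u) && (x != v)).
Proof.
apply: (iffP andP) => [[/eqP xu /eqP xv]|Sx]; first by case: (cover x) => [|[]].
by split; apply/eqP => ex; [apply: u_notin | apply: v_notin]; rewrite -ex.
Qed.

Lemma idempotent_zero w : S0 w -> op w w = w -> w = z.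
Proof. by move=> Sw ww; have [n <-] := S0_nil Sw; rewrite /spow iter_fix. Qed.

Lemma zero_mull s : op s z = z.
Proof.
have Ssz : S0 (op s z) by case: (S0_ideal s S0_z).
by apply: idempotent_zero => //; rewrite -opA (proj1 (z_zero Ssz)).
Qed.

Lemma zero_mulr s : op z s = z.
Proof.
have Szs : S0 (op z s) by case: (S0_ideal s S0_z).
by apply: idempotent_zero => //; rewrite opA (proj2 (z_zero Szs)).
Qed.

Lemma divides_z y : divides z y -> y = z.
Proof.
by move=> [p [q ->]]; case: p => [s|]; case: q => [t|] /=; rewrite ?zero_mulr ?zero_mull.
Qed.

Definition in_S0 (p : option S) : Prop := if p is Some s then S0 s else False.

Definition unital (p : option S) : Prop := p = None \/ p = Some u \/ p = Some v.

Lemma unital_not_S0 p : ~ in_S0 p -> unital p.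
Proof.
case: p => [s /= Ss|_]; last by left.
by right; case: (cover s) => [//|[->|->]]; [left | right].
Qed.

Lemma in_S0_mul p q : in_S0 p \/ in_S0 q -> in_S0 (mul1 p q).
Proof.
case: p => [s|]; case: q => [t|] //= [Sp|Sq] //.
- exact: S0_mulr.
- exact: S0_mull.
Qed.

Lemma lmul_z p : lmul op p z = z.
Proof. by case: p => //= s; rewrite zero_mull. Qed.

(* If a = p a q with p or q in the nil ideal S0, then a = p^n a q^n = z. *)
Lemma nil_cycle a p q : a = act p a q -> in_S0 p \/ in_S0 q -> a = z.
Proof.
rewrite /act => acyc; case=> [Sp|Sq].
- case: p Sp acyc => [s|] //= Ss acyc; have [n sn] := S0_nil Ss.
  have comm y : op s (rmul op q y) = rmul op q (op s y) := lmul_rmul opA (Some s) q y.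
  have fixa : iter n.+1 (fun y => op s (rmul op q y)) a = a.
    by apply: iter_fix; rewrite -acyc.
  by rewrite -fixa (iter_comp (f := op s) (g := rmul op q) comm) iter_mull // sn zero_mulr.
- case: q Sq acyc => [t|] //= St acyc; have [n tn] := S0_nil St.
  have comm y : lmul op p (op y t) = op (lmul op p y) t := lmul_rmul opA p (Some t) y.
  have fixa : iter n.+1 (fun y => lmul op p (op y t)) a = a.
    by apply: iter_fix; rewrite -acyc.
  rewrite -fixa (iter_comp (f := lmul op p) (g := op^~ t) comm) iter_mulr //.
  by rewrite tn zero_mull iter_fix // lmul_z.
Qed.

Definition ideal (x : S) : {set S} :=
  [set y | [exists p : option S, exists q : option S, y == act p x q]].

Lemma idealP x y : reflect (divides x y) (y \in ideal x).
Proof.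
rewrite inE; apply: (iffP existsP) => [[p /existsP [q /eqP e]]|[p [q e]]].
  by exists p, q.
by exists p; apply/existsP; exists q; apply/eqP.
Qed.

Definition in_uv (x : S) : Prop := x = u \/ x = v.

Lemma uv_mul x y : in_uv x -> in_uv y -> op x y = y.
Proof. by move=> [->|->] [->|->]. Qed.

Definition with_uv (E : S -> S -> Prop) (x y : S) : Prop :=
  E x y \/ (in_uv x /\ in_uv y).

Section CollapseS0.
Variable E : S -> S -> Prop.
Hypotheses (E_cong : is_congruence op E) (E_rees : included E (rees S0))
  (E_left : forall w, S0 w -> E (op u w) (op v w))
  (E_right : forall w, S0 w -> E (op w u) (op w v)).

Lemma uv_translate x y c : in_uv x -> in_uv y -> S0 c ->
  E (op x c) (op y c) /\ E (op c x) (op c y).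
Proof.
have [Erefl [Esym _]] := E_cong.
by move=> [->|->] [->|->] Sc; split; auto.
Qed.

(* Since E only relates elements of S0, adding the class {u, v} to it
   keeps a congruence. *)
Lemma with_uv_congruence : is_congruence op (with_uv E).
Proof.
have [Erefl [Esym [Etrans Ecomp]]] := E_cong.
have uv_isolated x y : in_uv x -> E x y -> x = y.
  by move=> [->|->] /E_rees [//|[]].
apply: equivalence_congruence.
  split; first by left.
  split; first by move=> x y [/Esym|[]]; [left|right].
  move=> x y w [Exy|[ux uy]] [Eyw|[uy' uw]].
  - by left; apply: Etrans Exy Eyw.
  - by right; rewrite -(uv_isolated y x uy' (Esym _ _ Exy)).
  - by right; rewrite -(uv_isolated y w uy Eyw).
  - by right.
move=> x y c [Exy|[ux uy]]; first by have [] := Ecomp x y c Exy; split; left.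
case: (cover c) => [Sc|uc]; first by have [] := uv_translate ux uy Sc; split; left.
rewrite (uv_mul ux uc) (uv_mul uy uc) (uv_mul uc ux) (uv_mul uc uy).
by split; right; split.
Qed.

(* The Δ-property forces E to identify all of S0. *)
Lemma collapse_S0 x y : S0 x -> S0 y -> E x y.
Proof.
move=> Sx Sy.
case: (delta (rees_congruence S0_ideal) with_uv_congruence) => [sub|sub].
- case: (sub x y (or_intror (conj Sx Sy))) => [//|[[ex|ex] _]]; exfalso.
  + by apply: u_notin; rewrite -ex.
  + by apply: v_notin; rewrite -ex.
- case: (sub u v (or_intror (conj (or_introl erefl) (or_intror erefl)))) => [uv_eq|[Su _]].
  + by case: u_neq_v.
  + by case: u_notin.
Qed.

End CollapseS0.

Section MaximalElement.
Variable a : S.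
Hypotheses (S0_a : S0 a) (a_neq_z : a <> z)
  (a_max : forall x, S0 x -> x <> z -> #|ideal x| <= #|ideal a|).

Lemma divides_maximal x : S0 x -> divides x a -> divides a x.
Proof.
move=> Sx xa.
have x_neq_z : x <> z by move=> ex; apply: a_neq_z; apply: divides_z; rewrite -ex.
have sub : ideal a \subset ideal x.
  by apply/subsetP => y /idealP ay; apply/idealP; exact: (divides_trans opA xa ay).
have ideal_eq : ideal a = ideal x by apply/eqP; rewrite eqEcard sub a_max.
by apply/idealP; rewrite ideal_eq; apply/idealP; apply: divides_refl.
Qed.

Lemma unital_factors x : S0 x -> divides x a ->
  exists p q, x = act p a q /\ unital p /\ unital q.
Proof.
move=> Sx xa; have [p [q ex]] := divides_maximal Sx xa.
have [p' [q' ea]] := xa.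
have cyc : a = act (mul1 p' p) a (mul1 q q') by rewrite {1}ea ex actM.
exists p, q; split=> //.
by split; apply: unital_not_S0 => S0pq; apply: a_neq_z; apply: (nil_cycle cyc);
  [left | right]; apply: in_S0_mul; [right | left].
Qed.

Definition below_a (x : S) : Prop := S0 x /\ ~ divides x a.

Lemma below_a_act x p q : below_a x -> below_a (act p x q).
Proof.
move=> [Sx xna]; split; first exact: S0_act.
by move=> /(divides_trans opA (divides_act op x p q)).
Qed.

Lemma below_a_proper x p q : S0 x -> in_S0 p \/ in_S0 q -> below_a (act p x q).
Proof.
move=> Sx pq; split; first exact: S0_act.
move=> above; have xa := divides_trans opA (divides_act op x p q) above.
have [p' [q' ea]] := above; have [p'' [q'' ex]] := divides_maximal Sx xa.
have cyc : a = act (mul1 p' (mul1 p p'')) a (mul1 (mul1 q'' q) q').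
  by rewrite {1}ea ex (actM opA p) actM.
apply: a_neq_z; apply: (nil_cycle cyc).
by case: pq => [Sp|Sq]; [left | right]; apply: in_S0_mul;
  [right; apply: in_S0_mul; left | left; apply: in_S0_mul; right].
Qed.

Lemma below_a_mul x c : below_a x -> below_a (op x c) /\ below_a (op c x).
Proof.
by move=> bx; split; [apply: (below_a_act None (Some c)) | apply: (below_a_act (Some c) None)].
Qed.

Lemma a_not_below : ~ below_a a.
Proof. by move=> [_]; apply; apply: divides_refl. Qed.

Lemma z_below : below_a z.
Proof. by split=> // /divides_z. Qed.

Lemma rees_below_a_separates : ~ rees below_a a z.
Proof. by case=> [//|[/a_not_below]]. Qed.

Definition left_gen (x y : S) : Prop :=
  (below_a x /\ below_a y) \/ exists w, S0 w /\ x = op u w /\ y = op v w.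

Definition right_gen (x y : S) : Prop :=
  (below_a x /\ below_a y) \/ exists w, S0 w /\ x = op w u /\ y = op w v.

Lemma left_pair w : S0 w -> equiv_closure left_gen (op u w) (op v w).
Proof. by move=> Sw; apply: ec_base; right; exists w. Qed.

Lemma right_pair w : S0 w -> equiv_closure right_gen (op w u) (op w v).
Proof. by move=> Sw; apply: ec_base; right; exists w. Qed.

(* Both closures are congruences: translating a defining pair gives a
   defining pair, a pair of equal elements, or a pair inside below_a. *)
Lemma left_congruence : is_congruence op (equiv_closure left_gen).
Proof.
apply: equiv_closure_congruence => x y c [[bx by_]|[w [Sw [-> ->]]]].
  have [bxc bcx] := below_a_mul c bx; have [byc bcy] := below_a_mul c by_.
  by split; apply: ec_base; left.
split; first by rewrite -!opA; apply/left_pair/S0_mulr.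
case: (cover c) => [Sc|[->|->]].
- apply: ec_base; left; split.
  + exact: (below_a_proper (p := Some c) (q := None) (S0_mull u Sw) (or_introl Sc)).
  + exact: (below_a_proper (p := Some c) (q := None) (S0_mull v Sw) (or_introl Sc)).
- by rewrite !opA uu uv; apply: left_pair.
- by rewrite !opA vu vv; apply: left_pair.
Qed.

Lemma right_congruence : is_congruence op (equiv_closure right_gen).
Proof.
apply: equiv_closure_congruence => x y c [[bx by_]|[w [Sw [-> ->]]]].
  have [bxc bcx] := below_a_mul c bx; have [byc bcy] := below_a_mul c by_.
  by split; apply: ec_base; left.
split; last by rewrite !opA; apply/right_pair/S0_mull.
case: (cover c) => [Sc|[->|->]].
- apply: ec_base; left; split.
  + exact: (below_a_proper (p := None) (q := Some c) (S0_mulr u Sw) (or_intror Sc)).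
  + exact: (below_a_proper (p := None) (q := Some c) (S0_mulr v Sw) (or_intror Sc)).
- by rewrite -!opA uu vu; apply: ec_refl.
- by rewrite -!opA uv vv; apply: ec_refl.
Qed.

Lemma left_rees : included (equiv_closure left_gen) (rees S0).
Proof.
apply: equiv_closure_min; first exact: rees_equivalence.
move=> x y [[[Sx _] [Sy _]]|[w [Sw [-> ->]]]]; right; split=> //.
all: exact: S0_mull.
Qed.

Lemma right_rees : included (equiv_closure right_gen) (rees S0).
Proof.
apply: equiv_closure_min; first exact: rees_equivalence.
move=> x y [[[Sx _] [Sy _]]|[w [Sw [-> ->]]]]; right; split=> //.
all: exact: S0_mulr.
Qed.

Lemma u_fixes_unital x p q : op u x = x -> unital p -> op u (act p x q) = act p x q.
Proof.
move=> ux [->|[->|->]] /=.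
- by case: q => //= t; rewrite opA ux.
- by rewrite opA uu.
- by rewrite opA uv.
Qed.

Lemma unital_mulr_u x p q : unital q -> op (act p x q) u = act p x (Some u).
Proof.
move=> uq; have absorb : op (rmul op q x) u = op x u.
  by case: uq => [->|[->|->]] //=; rewrite -opA ?uu ?vu.
by case: p => [s|] /=; rewrite -?opA absorb.
Qed.

(* The left closure does not relate a and z: if ua = a every defining pair
   lies in the Rees relation of below_a, otherwise the class of a is {a}. *)
Lemma left_separates : ~ equiv_closure left_gen a z.
Proof.
move=> aRz; have [ua|ua] := eqVneq (op u a) a.
-
  apply: rees_below_a_separates.
  apply: (equiv_closure_min (rees_equivalence below_a) _ aRz).
  move=> x y [bxy|[w [Sw [-> ->]]]]; first by right.
  case: (idealP w a) => [wa|wna].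
    have [p [q [ew [up _]]]] := unital_factors Sw wa.
    have uw : op u w = w by rewrite ew u_fixes_unital.
    by left; rewrite -{2}uw opA vu.
  have bw : below_a w by split.
  by right; split; [apply: (below_a_act (Some u) None) | apply: (below_a_act (Some v) None)].
-
  have : (a == a) = (z == a).
    apply: (equiv_closure_min (preimage_equivalence (eq_op^~ a) (@eq_equivalence _)) _ aRz).
    move=> x y [[bx by_]|[w [Sw [-> ->]]]].
      have below_neq b : below_a b -> (b == a) = false.
        by move=> bb; apply/eqP => ba; apply: a_not_below; rewrite -ba.
      by rewrite !below_neq.
    have uw_neq : op u w != a by apply/eqP => e; move/eqP: ua; apply; rewrite -e opA uu.
    have vw_neq : op v w != a by apply/eqP => e; move/eqP: ua; apply; rewrite -e opA uv.
    by rewrite (negbTE uw_neq) (negbTE vw_neq).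
  by rewrite eqxx => /esym /eqP za; apply: a_neq_z; rewrite za.
Qed.

(* The right closure does not relate a and z: right multiplication by u
   shows au ∈ below_a, and then every defining pair lies in the Rees
   relation of below_a. *)
Lemma right_separates : ~ equiv_closure right_gen a z.
Proof.
move=> aRz.
have below_au : below_a (op a u).
  have : rees below_a (op a u) (op z u).
    apply: (equiv_closure_min (preimage_equivalence (op^~ u) (rees_equivalence _)) _ aRz).
    move=> x y [[bx by_]|[w [Sw [-> ->]]]].
      by right; split; apply: (below_a_act None (Some u)).
    by left; rewrite -!opA uu vu.
  by rewrite zero_mulr => -[->|[]//]; apply: z_below.
apply: rees_below_a_separates.
apply: (equiv_closure_min (rees_equivalence below_a) _ aRz).
move=> x y [bxy|[w [Sw [-> ->]]]]; first by right.
have below_wu : below_a (op w u).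
  case: (idealP w a) => [wa|wna]; last by apply: (below_a_act None (Some u)); split.
  have [p [q [-> [_ uq]]]] := unital_factors Sw wa.
  by rewrite unital_mulr_u //; apply: (below_a_act p None).
by right; split=> //; rewrite -uv opA; apply: (below_a_act None (Some v)).
Qed.

(* Whichever of the two closures is larger collapses S0, relating a and z. *)
Lemma no_maximal_element : False.
Proof.
case: (delta left_congruence right_congruence) => [lr|rl].
- apply: right_separates; apply: collapse_S0 => //.
  + exact: right_congruence.
  + exact: right_rees.
  + by move=> w /left_pair /lr.
  + exact: right_pair.
- apply: left_separates; apply: collapse_S0 => //.
  + exact: left_congruence.
  + exact: left_rees.
  + exact: left_pair.
  + by move=> w /right_pair /rl.
Qed.

End MaximalElement.

(* Since S is finite, some non-zero element of S0 has a principal ideal of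
   maximal size; this contradicts the previous lemma. *)
Lemma no_T2R_structure : (exists x, S0 x /\ x <> z) -> False.
Proof.
move=> [x0 [Sx0 x0z]].
pose nonzero_S0 x := (x != u) && (x != v) && (x != z).
have x0_nonzero : nonzero_S0 x0 by rewrite /nonzero_S0 (introT (S0P x0)) //; apply/eqP.
case: (arg_maxnP (fun x => #|ideal x|) x0_nonzero) => a /andP [/S0P Sa /eqP az] amax.
apply: (@no_maximal_element a Sa az) => x Sx xz.
by apply: amax; rewrite /nonzero_S0 (introT (S0P x)) //; apply/eqP.
Qed.

End T2R.

Theorem mainTheorem8 (S : finType) (op : S -> S -> S) :
  associative op -> ~ T2R op.
Proof.
move=> opA [delta [S0 [z [u [v [u_neq_v [u_notin [v_notin [cover [S0_ideal
  [S0_z [z_zero [S0_nil [nontrivial [uu [uv [vu vv]]]]]]]]]]]]]]]]].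
exact: (no_T2R_structure opA delta u_neq_v u_notin v_notin cover S0_ideal
  S0_z z_zero S0_nil uu uv vu vv nontrivial).
Qed.
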